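(* Let $A$ be a unital power-associative algebra over a field $F$ of characteristic zero such that $A=F1\oplus N$ as vector spaces, where $N$ is a subalgebra in which every element is nilpotent. Then every Rota–Baxter operator $R$ of nonzero weight $\lambda$ on $A$ is splitting, and, up to replacing $R$ by $\phi(R)=-R-\lambda\,\mathrm{id}$, we have $R(1)=0$.
   Context: A linear operator $R\colon A\to A$ is a Rota–Baxter operator of weight $\lambda$ if $R(x)R(y)=R(R(x)y+xR(y)+\lambda xy)$ for all $x,y\in A$; then $\phi(R)=-R-\lambda\,\mathrm{id}$ is also an RB-operator of weight $\lambda$. An algebra is power-associative if every element generates an associative subalgebra. An RB-operator $R$ of weight $\lambda$ is splitting if $A=A_1\oplus A_2$ as vector spaces for subalgebras $A_1,A_2$ and $R(a_1+a_2)=-\lambda a_2$ for $a_1\in A_1,a_2\in A_2$. *)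

(* Not-necessarily-associative algebras over a field F are
   modelled as an lmodType F carrier together with a bilinear multiplication. *)
From HB Require Import structures.
From mathcomp Require Import all_boot all_order all_algebra.
Set Implicit Arguments. Unset Strict Implicit. Unset Printing Implicit Defensive.
Import Order.TTheory GRing.Theory Num.Theory.
Local Open Scope ring_scope.

Section NonAssoc.
Variables (F : fieldType) (A : lmodType F) (mul : A -> A -> A).

Definition bilinear_mul : Prop :=
  [/\ forall x y z, mul (x + y) z = mul x z + mul y z,
      forall x y z, mul x (y + z) = mul x y + mul x z,
      forall (k : F) x y, mul (k *: x) y = k *: mul x y
    & forall (k : F) x y, mul x (k *: y) = k *: mul x y].

Definition is_unit_elt (one : A) : Prop :=
  forall x, mul one x = x /\ mul x one = x.

Inductive gen_subalg (x : A) : A -> Prop :=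
  | gen_base : gen_subalg x x
  | gen_zero : gen_subalg x 0
  | gen_add a b : gen_subalg x a -> gen_subalg x b -> gen_subalg x (a + b)
  | gen_scale (k : F) a : gen_subalg x a -> gen_subalg x (k *: a)
  | gen_mul a b : gen_subalg x a -> gen_subalg x b -> gen_subalg x (mul a b).

Definition power_associative : Prop :=
  forall x a b c, gen_subalg x a -> gen_subalg x b -> gen_subalg x c ->
    mul (mul a b) c = mul a (mul b c).

(* npow x n = x^(n+1), left-normed *)
Fixpoint npow (x : A) (n : nat) : A :=
  match n with 0%N => x | n'.+1 => mul (npow x n') x end.

Definition nilpotent_elt (x : A) : Prop := exists n, npow x n = 0.

Definition subalgebra (S : A -> Prop) : Prop :=
  [/\ S 0, forall x y, S x -> S y -> S (x + y),
      forall (k : F) x, S x -> S (k *: x)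
    & forall x y, S x -> S y -> S (mul x y)].

Definition vs_direct_sum (S1 S2 : A -> Prop) : Prop :=
  (forall a, exists a1 a2, [/\ S1 a1, S2 a2 & a = a1 + a2]) /\
  (forall a, S1 a -> S2 a -> a = 0).

Definition linear_op (R : A -> A) : Prop :=
  forall (k : F) x y, R (k *: x + y) = k *: R x + R y.

Definition rota_baxter (lam : F) (R : A -> A) : Prop :=
  linear_op R /\
  forall x y, mul (R x) (R y) = R (mul (R x) y + mul x (R y) + lam *: mul x y).

Definition phi_op (lam : F) (R : A -> A) : A -> A := fun x => - R x - lam *: x.

Definition splitting_op (lam : F) (R : A -> A) : Prop :=
  exists A1 A2 : A -> Prop,
    [/\ subalgebra A1, subalgebra A2, vs_direct_sum A1 A2 &
        forall a1 a2, A1 a1 -> A2 a2 -> R (a1 + a2) = - (lam *: a2)].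

End NonAssoc.

(* Both R and phi(R) are Rota-Baxter operators, and their ranges are
   subalgebras. Writing R(1) = a 1 + n with n nilpotent, one of R(1) and
   phi(R)(1) = -(a + lam) 1 - n has an invertible scalar part, and a
   subalgebra containing k 1 + n with k <> 0 contains 1 (repeatedly square
   1 - p into 1 - p^2 until the power of p vanishes). So 1 lies in the range of
   R or of phi(R); by the symmetry R <-> phi(R) say 1 = phi(T)(z). The range of
   T cannot also contain 1 unless 1 = 0, so T(z) lies in N, and the
   eigenspace T u = -lam u, which is stable under right multiplication by
   T(z), then absorbs T(z) and forces T(1) = 0. Finally R(1) = 0 or
   phi(R)(1) = 0 gives R (R + lam) = 0, so R is -lam times an idempotent
   and splits A into ker R and ker (R + lam). *)
From HB Require Import structures.
From mathcomp Require Import all_boot all_order all_algebra.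
From mathcomp Require Import zify.
Import GRing.Theory.
Set Implicit Arguments. Unset Strict Implicit.
Local Open Scope ring_scope.

Section LinearOp.
Variables (F : fieldType) (A : lmodType F) (T : A -> A).
Hypothesis T_linear : linear_op T.

Lemma linear_opD x y : T (x + y) = T x + T y.
Proof. by have := T_linear 1 x y; rewrite !scale1r. Qed.

Lemma linear_op0 : T 0 = 0.
Proof. by apply: (@addrI _ (T 0)); rewrite -linear_opD !addr0. Qed.

Lemma linear_opZ k x : T (k *: x) = k *: T x.
Proof. by have := T_linear k x 0; rewrite addr0 linear_op0 addr0. Qed.

Lemma linear_opN x : T (- x) = - T x.
Proof. by rewrite -scaleN1r linear_opZ scaleN1r. Qed.

End LinearOp.

Lemma phi_opK (F : fieldType) (A : lmodType F) (lam : F) (T : A -> A) x :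
  phi_op lam (phi_op lam T) x = T x.
Proof. by rewrite /phi_op opprD !opprK addrK. Qed.

Section BilinearAlgebra.
Variables (F : fieldType) (A : lmodType F) (mul : A -> A -> A).
Hypothesis mul_bilinear : bilinear_mul mul.

Lemma bmulDl x y z : mul (x + y) z = mul x z + mul y z.
Proof. by case: mul_bilinear. Qed.
Lemma bmulDr x y z : mul x (y + z) = mul x y + mul x z.
Proof. by case: mul_bilinear. Qed.
Lemma bmulZl k x y : mul (k *: x) y = k *: mul x y.
Proof. by case: mul_bilinear. Qed.
Lemma bmulZr k x y : mul x (k *: y) = k *: mul x y.
Proof. by case: mul_bilinear. Qed.
Lemma bmul0l y : mul 0 y = 0.
Proof. by have := bmulZl 0 0 y; rewrite !scale0r. Qed.
Lemma bmul0r y : mul y 0 = 0.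
Proof. by have := bmulZr 0 y 0; rewrite !scale0r. Qed.
Lemma bmulNl x y : mul (- x) y = - mul x y.
Proof. by rewrite -scaleN1r bmulZl scaleN1r. Qed.
Lemma bmulNr x y : mul x (- y) = - mul x y.
Proof. by rewrite -scaleN1r bmulZr scaleN1r. Qed.
Lemma bmulBl x y z : mul (x - y) z = mul x z - mul y z.
Proof. by rewrite bmulDl bmulNl. Qed.
Lemma bmulBr x y z : mul x (y - z) = mul x y - mul x z.
Proof. by rewrite bmulDr bmulNr. Qed.

Lemma subalgebraN (S : A -> Prop) x : subalgebra mul S -> S x -> S (- x).
Proof. by case=> _ _ SZ _ Sx; rewrite -scaleN1r; apply: SZ. Qed.

Lemma npow_gen_subalg x k : gen_subalg mul x (npow mul x k).
Proof.
by elim: k => [|k IHk] /=; [apply: gen_base | apply: gen_mul IHk (gen_base _ _)].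
Qed.

Lemma npowD x i j : power_associative mul ->
  mul (npow mul x i) (npow mul x j) = npow mul x (i + j).+1.
Proof.
move=> PA; elim: j => [|j IHj] /=; first by rewrite addn0.
by rewrite -(PA x) ?IHj ?addnS //; [apply: npow_gen_subalg.. | apply: gen_base].
Qed.

Lemma npowZ k x j : npow mul (k *: x) j = k ^+ j.+1 *: npow mul x j.
Proof.
by elim: j => [|j IHj] /=; rewrite ?expr1 // IHj bmulZl bmulZr scalerA -exprSr.
Qed.

Lemma npow_eq0_leq x m n : npow mul x m = 0 -> (m <= n)%N -> npow mul x n = 0.
Proof.
move=> xm0 /subnKC <-; elim: (n - m)%N => [|d IHd]; first by rewrite addn0.
by rewrite addnS /= IHd bmul0l.
Qed.

Lemma nilpotent_eltZ k x : nilpotent_elt mul x -> nilpotent_elt mul (k *: x).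
Proof. by case=> m xm0; exists m; rewrite npowZ xm0 scaler0. Qed.

Section Unital.
Variable one : A.
Hypothesis one_unit : is_unit_elt mul one.

Lemma one_sub_sqr p :
  (one - p) + (one - p) - mul (one - p) (one - p) = one - mul p p.
Proof.
rewrite bmulBl !bmulBr !(proj1 (one_unit _)) (proj2 (one_unit _)).
by rewrite opprB addrC subrKA addrC addrA subrK.
Qed.

Hypothesis mul_power_assoc : power_associative mul.

(* [npow p (2 ^ j - 1)] is [p ^ (2 ^ j)]. *)
Lemma subalgebra_one_sub_npow (S : A -> Prop) p j :
  subalgebra mul S -> S (one - p) -> S (one - npow mul p (2 ^ j - 1)).
Proof.
move=> S_sub Sp; have [_ SD _ SM] := S_sub.
elim: j => [|j IHj] //=.
have -> : (2 ^ j.+1 - 1 = ((2 ^ j - 1) + (2 ^ j - 1)).+1)%N.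
  by rewrite expnS; have := expn_gt0 2 j; lia.
rewrite -npowD // -one_sub_sqr.
by apply: (SD); [apply: (SD) | apply: subalgebraN; last apply: SM].
Qed.

Lemma subalgebra_one (S : A -> Prop) k n :
  subalgebra mul S -> S (k *: one + n) -> k != 0 -> nilpotent_elt mul n -> S one.
Proof.
move=> S_sub Skn k0 n_nil; have [_ _ SZ _] := S_sub.
pose p := - k^-1 *: n.
have [m pm0] : nilpotent_elt mul p by apply: nilpotent_eltZ.
have Sp : S (one - p).
  have -> : one - p = k^-1 *: (k *: one + n).
    by rewrite scalerDr scalerA mulVf // scale1r /p scaleNr opprK.
  exact: SZ.
have := subalgebra_one_sub_npow m S_sub Sp.
rewrite (npow_eq0_leq pm0) ?subr0 //.
by have := ltn_expl m (ltnSn 1); lia.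
Qed.

End Unital.

Definition range_op (T : A -> A) (y : A) : Prop := exists x, T x = y.

Section RotaBaxter.
Variables (lam : F) (T : A -> A).
Hypothesis T_rb : rota_baxter mul lam T.
Let T_linear : linear_op T := proj1 T_rb.
Let rbE : forall x y,
  mul (T x) (T y) = T (mul (T x) y + mul x (T y) + lam *: mul x y) := proj2 T_rb.
Let TD := linear_opD T_linear.
Let TZ := linear_opZ T_linear.
Let TN := linear_opN T_linear.
Let T0 := linear_op0 T_linear.

Lemma range_rb_subalgebra : subalgebra mul (range_op T).
Proof.
split.
- by exists 0; rewrite T0.
- by move=> _ _ [a <-] [b <-]; exists (a + b); rewrite TD.
- by move=> k _ [a <-]; exists (k *: a); rewrite TZ.
- by move=> _ _ [a <-] [b <-]; eexists; rewrite rbE.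
Qed.

Lemma phi_op_rota_baxter : rota_baxter mul lam (phi_op lam T).
Proof.
split=> [k x y | x y].
  rewrite /phi_op T_linear scalerBr !scalerN scalerDr !scalerA mulrC.
  by rewrite !opprD addrACA.
have phiE v : phi_op lam T v = - (T v + lam *: v) by rewrite /phi_op opprD.
rewrite !phiE !bmulNl !bmulNr opprK.
set X := mul (T x) y + mul x (T y) + lam *: mul x y.
have -> : - mul (T x + lam *: x) y - mul x (T y + lam *: y) + lam *: mul x y
          = - X.
  by rewrite bmulDl bmulDr bmulZl bmulZr !opprD -addrA subrK addrAC.
rewrite TN scalerN -opprD opprK.
by rewrite bmulDl !bmulDr !bmulZl !bmulZr rbE -/X !scalerDr -!addrA.
Qed.

Lemma rb_eigen_mulr u z :
  T u = - (lam *: u) -> T (mul u (T z)) = - (lam *: mul u (T z)).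
Proof.
move=> Tu; have := rbE u z.
by rewrite Tu !bmulNl !bmulZl addrAC addNr add0r => <-.
Qed.

Section Unital.
Variable one : A.
Hypothesis one_unit : is_unit_elt mul one.
Let mul1r x : mul one x = x := proj1 (one_unit x).
Let mulr1 x : mul x one = x := proj2 (one_unit x).

Lemma rb_ranges_one_eq0 x z :
  T x = one -> T z + lam *: z = one -> one = 0.
Proof.
move=> Tx Tz; have := rbE x z.
rewrite Tx !mul1r -addrA -bmulZr -bmulDr Tz mulr1 TD Tx.
by move=> h; apply: (@addrI _ (T z)); rewrite addr0 -h.
Qed.

(* [w = T z] is nilpotent and the eigenspace [T u = - lam u] contains
   [w - w^(k+1)] for every [k], hence [w] itself. *)
Lemma rb_one_eq0_nilpotent z :
  T z + lam *: z = one -> nilpotent_elt mul (T z) -> T one = 0.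
Proof.
move=> Tz [m wm0]; set w := T z in Tz wm0 *.
pose eigen u := T u = - (lam *: u).
have eigenD u v : eigen u -> eigen v -> eigen (u + v).
  by rewrite /eigen => Tu Tv; rewrite TD Tu Tv scalerDr opprD.
have Tzw : T (mul z w) = mul w w - w.
  have := rbE z z; rewrite -/w -bmulZl addrAC -bmulDl Tz mul1r TD => ->.
  by rewrite -/w [w + _]addrC addrK.
have eigen_sqr : eigen (w - mul w w).
  have lamz : lam *: z = one - w by rewrite -Tz [w + _]addrC addrK.
  have sqrE : w - mul w w = lam *: mul z w by rewrite -bmulZl lamz bmulBl mul1r.
  by rewrite /eigen {1}sqrE TZ Tzw -scalerN opprB.
have eigen_pow k : eigen (w - npow mul w k).
  elim: k => [|k IHk]; first by rewrite /eigen subrr T0 scaler0 oppr0.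
  have -> : w - npow mul w k.+1 = (w - mul w w) + mul (w - npow mul w k) w.
    by rewrite bmulBl addrA subrK.
  exact: eigenD (rb_eigen_mulr _ IHk).
have Tw : T w = - (lam *: w) by have := eigen_pow m; rewrite wm0 subr0.
by rewrite -Tz TD TZ Tw addNr.
Qed.

Lemma rb_comp_phi_eq0 : T one = 0 \/ phi_op lam T one = 0 ->
  forall x, T (T x + lam *: x) = 0.
Proof.
move=> T1 x; have := rbE x one; rewrite !mulr1.
case: T1 => [-> | /eqP]; first by rewrite !bmul0r addr0 => <-.
rewrite subr_eq0 eqr_oppLR => /eqP ->.
by rewrite !bmulNr !bmulZr !mulr1 subrK TD TZ => <-; rewrite addNr.
Qed.

End Unital.

Lemma rb_splitting : lam != 0 -> (forall x, T (T x + lam *: x) = 0) ->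
  splitting_op mul lam T.
Proof.
move=> lam0 TphiT.
have TT x : T (T x) = - (lam *: T x).
  by apply/eqP; rewrite -addr_eq0 -TZ -TD TphiT.
exists (fun a => T a = 0), (fun a => T a = - (lam *: a)); split.
- split=> [| x y Tx Ty | k x Tx | x y Tx Ty].
  + exact: T0.
  + by rewrite TD Tx Ty addr0.
  + by rewrite TZ Tx scaler0.
  + have := rbE x y; rewrite Tx Ty !bmul0l !bmul0r !add0r TZ.
    by move/eqP; rewrite eq_sym scaler_eq0 (negbTE lam0) => /eqP.
- split=> [| x y Tx Ty | k x Tx | x y Tx Ty].
  + by rewrite T0 scaler0 oppr0.
  + by rewrite TD Tx Ty scalerDr opprD.
  + by rewrite TZ Tx scalerN !scalerA mulrC.
  + have := rbE x y; rewrite Tx Ty !bmulNl !bmulNr !bmulZl !bmulZr opprK.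
    rewrite -addrA addNr addr0 TN TZ => TTxy.
    by apply: (scalerI lam0); rewrite scalerN TTxy opprK.
- split=> [a | a Ta].
  + exists (lam^-1 *: (T a + lam *: a)), (- (lam^-1 *: T a)); split.
    * by rewrite TZ TphiT scaler0.
    * by rewrite TN TZ TT !scalerN !scalerA mulVf // mulfV.
    * by rewrite scalerDr scalerA mulVf // scale1r addrAC subrr add0r.
  + move=> /eqP; rewrite Ta eq_sym oppr_eq0 scaler_eq0.
    by rewrite (negbTE lam0) => /eqP.
- by move=> a1 a2 Ta1 Ta2; rewrite TD Ta1 Ta2 add0r.
Qed.

End RotaBaxter.
End BilinearAlgebra.

Section UnitPlusNilpotent.
Variables (F : fieldType) (A : lmodType F) (mul : A -> A -> A).
Variables (one : A) (N : A -> Prop).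
Hypotheses (mul_bilinear : bilinear_mul mul) (one_unit : is_unit_elt mul one).
Hypothesis mul_power_assoc : power_associative mul.
Hypothesis N_nil : forall n, N n -> nilpotent_elt mul n.
Hypothesis A_decomp : vs_direct_sum (fun a => exists k : F, a = k *: one) N.
Let subalgebra_one := subalgebra_one mul_bilinear one_unit mul_power_assoc.

Lemma rb_one_eq0 lam T : rota_baxter mul lam T ->
  range_op (phi_op lam T) one -> T one = 0.
Proof.
move=> T_rb [z phiTz]; have T_linear := proj1 T_rb.
have Tz : T (- z) + lam *: - z = one.
  by rewrite -phiTz (linear_opN T_linear) scalerN.
have [_ [n [[g ->] /N_nil n_nil Tz_dec]]] := proj1 A_decomp (T (- z)).
have [g0 | g0] := eqVneq g 0.
  apply: (rb_one_eq0_nilpotent mul_bilinear T_rb one_unit Tz).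
  by rewrite Tz_dec g0 scale0r add0r.
have [x Tx] : range_op T one.
  by apply: (subalgebra_one (range_rb_subalgebra T_rb) _ g0 n_nil); exists (- z).
have one0 := rb_ranges_one_eq0 mul_bilinear T_rb one_unit Tx Tz.
by rewrite {}one0 (linear_op0 T_linear).
Qed.

Lemma range_one_or_phi lam R : lam != 0 -> rota_baxter mul lam R ->
  range_op R one \/ range_op (phi_op lam R) one.
Proof.
move=> lam0 R_rb.
have [_ [n [[a ->] /N_nil n_nil R1]]] := proj1 A_decomp (R one).
have [a0 | a0] := eqVneq a 0; [right | left].
  have phiR_sub := range_rb_subalgebra (phi_op_rota_baxter mul_bilinear R_rb).
  apply: (subalgebra_one phiR_sub _ _ (nilpotent_eltZ mul_bilinear (-1) n_nil)).
  - by exists one; rewrite /phi_op R1 a0 scale0r add0r scaleN1r addrC -scaleNr.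
  - by rewrite oppr_eq0.
by apply: (subalgebra_one (range_rb_subalgebra R_rb) _ a0 n_nil); exists one.
Qed.

Lemma rb_one_or_phi_one_eq0 lam R : lam != 0 -> rota_baxter mul lam R ->
  R one = 0 \/ phi_op lam R one = 0.
Proof.
move=> lam0 R_rb; case: (range_one_or_phi lam0 R_rb) => [[x Rx] | phiR_one].
  right; apply: rb_one_eq0 (phi_op_rota_baxter mul_bilinear R_rb) _.
  by exists x; rewrite phi_opK.
by left; apply: rb_one_eq0 R_rb phiR_one.
Qed.

End UnitPlusNilpotent.

Unset Implicit Arguments.

Theorem theorem9 (F : fieldType) (A : lmodType F) (mul : A -> A -> A) (one : A)
  (N : A -> Prop) (lam : F) (R : A -> A) :
  [pchar F] =i pred0 ->
  bilinear_mul mul ->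
  is_unit_elt mul one ->
  power_associative mul ->
  subalgebra mul N ->
  (forall n, N n -> nilpotent_elt mul n) ->
  vs_direct_sum (fun a => exists k : F, a = k *: one) N ->
  lam != 0 ->
  rota_baxter mul lam R ->
  splitting_op mul lam R /\ (R one = 0 \/ phi_op lam R one = 0).
Proof.
move=> _ mul_bilinear one_unit mul_power_assoc _ N_nil A_decomp lam0 R_rb.
have R1 := rb_one_or_phi_one_eq0 mul_bilinear one_unit mul_power_assoc N_nil
  A_decomp lam0 R_rb.
split=> //; apply: (rb_splitting mul_bilinear R_rb lam0).
exact: (rb_comp_phi_eq0 mul_bilinear R_rb one_unit R1).
Qed.
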